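(* Let $[0,1]=\bigsqcup_{i=1}^K I_i$ be a partition into intervals with rational Lebesgue measures $\mu(I_i)>0$. Let $N$ be the least common multiple of the denominators of the $\mu(I_i)$, $k\ge1$ and $N_k=kN\ge2$. Let $X$ be a set of $N_k$ sampled points with $m(I_i)=N_k\mu(I_i)$ points in each $I_i$, $m$ the counting measure on $X$. Let $W$ be a one-level hierarchical graphon with inter-community value $p$, and define $(Lf)(x)=\sum_{y\in X}W(x,y)(f(y)-f(x))$ for $f:X\to\mathbb R$, $x\in X$. Then every $f\in\mathcal V_{\mathrm{root}}$ satisfies $Lf=-p\,m(X)\,f$.
   Context: A one-level hierarchical graphon (relative to the partition $[0,1]=\bigsqcup_i I_i$) is a function $W:[0,1]^2\to[0,1]$ such that for each $i$, $W(x,y)=W_i(x,y)$ for $x,y\in I_i$, where $W_i$ is an arbitrary continuous symmetric function, and $W(x,y)=p$ (a fixed constant, the inter-community connection probability, denoted $w(h([0,1]))$ in the paper) whenever $x\in I_i$, $y\in I_j$, $i\ne j$. $\mathcal V_{\mathrm{root}}$ is the space of functions $\psi:X\to\mathbb R$ that are constant on each $X\cap I_i$, say equal to $a_i$, with $\sum_i m(I_i)a_i=0$. *)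

From HB Require Import structures.
From mathcomp Require Import all_boot all_order all_algebra.
From mathcomp Require Import all_classical all_reals all_analysis.
Set Implicit Arguments. Unset Strict Implicit. Unset Printing Implicit Defensive.
Import Order.TTheory GRing.Theory Num.Theory.
Local Open Scope ring_scope.
Import numFieldNormedType.Exports.
Local Open Scope classical_set_scope.

Section Defs.
Variables (R : realType) (K : nat).

Definition is_interval_partition (I : 'I_K -> interval R) : Prop :=
  (forall i j : 'I_K, i != j -> forall x : R, ~ (x \in I i /\ x \in I j)) /\
  (forall x : R, (0 <= x <= 1) <-> exists i : 'I_K, x \in I i).

Definition one_level_hierarchical_graphon (I : 'I_K -> interval R)
  (W : R -> R -> R) (p : R) : Prop :=
  (forall x y : R, 0 <= x <= 1 -> 0 <= y <= 1 -> 0 <= W x y <= 1) /\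
  (forall i : 'I_K,
     {within [set z : R * R | z.1 \in I i /\ z.2 \in I i],
        continuous ((fun z : R * R => W z.1 z.2) : R * R -> R)} /\
     (forall x y : R, x \in I i -> y \in I i -> W x y = W y x)) /\
  (forall (i j : 'I_K) (x y : R), i != j -> x \in I i -> y \in I j -> W x y = p).

(* counting measure m on the finite sample X (a duplicate-free list) *)
Definition cmeas (X : seq R) (A : interval R) : nat := count (fun x => x \in A) X.

Definition V_root (I : 'I_K -> interval R) (X : seq R) (f : R -> R) : Prop :=
  exists a : 'I_K -> R,
    (forall (i : 'I_K) (x : R), x \in X -> x \in I i -> f x = a i) /\
    \sum_(i < K) (cmeas X (I i))%:R * a i = 0.

Definition graph_laplacian (W : R -> R -> R) (X : seq R) (f : R -> R) (x : R) : R :=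
  \sum_(y <- X) W x y * (f y - f x).

End Defs.

From HB Require Import structures.
From mathcomp Require Import all_boot all_order all_algebra.
From mathcomp Require Import all_classical all_reals all_analysis.
Import Order.TTheory GRing.Theory Num.Theory.
Local Open Scope ring_scope.
Local Open Scope classical_set_scope.

(* Proof idea: for f in V_root, each term W(x,y)(f(y) - f(x)) equals
   p (f(y) - f(x)): inside a block f(y) = f(x), across blocks W = p.  Hence
   (Lf)(x) = p (Σ_y f(y) - m(X) f(x)), and Σ_y f(y) = Σ_i m(I_i) a_i = 0. *)

Section IntervalPartition.
Context {R : realType} {K : nat} {I : 'I_K -> interval R}.
Hypothesis partI : is_interval_partition I.

Lemma partition_block_uniq {i j : 'I_K} {x : R} :
  x \in I i -> x \in I j -> i = j.
Proof.
move=> xi xj; apply/eqP; apply: contraT => ij.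
by case: (partI.1 i j ij x).
Qed.

Lemma partition_block_exists {x : R} : 0 <= x <= 1 -> exists i, x \in I i.
Proof. exact: (partI.2 x).1. Qed.

Lemma partition_indicator_sum (a : 'I_K -> R) {i : 'I_K} {x : R} :
  x \in I i -> \sum_(j < K) (x \in I j)%:R * a j = a i.
Proof.
move=> xi; rewrite (bigD1 i) //= xi mul1r big1 ?addr0 // => j ji.
case xj: (x \in I j); last by rewrite mul0r.
by rewrite (partition_block_uniq xj xi) eqxx in ji.
Qed.

Section SampledFunction.
Context {X : seq R} {f : R -> R}.
Hypotheses (X01 : forall x, x \in X -> 0 <= x <= 1) (fV : V_root I X f).

Lemma V_root_sum_eq0 : \sum_(y <- X) f y = 0.
Proof.
have [a [fa sum_a]] := fV.
have fE y : y \in X -> f y = \sum_(i < K) (y \in I i)%:R * a i.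
  move=> yX; have [i yi] := partition_block_exists (X01 _ yX).
  by rewrite (partition_indicator_sum _ yi) (fa i y yX yi).
rewrite (eq_big_seq _ fE) exchange_big -[RHS]sum_a; apply: eq_bigr => i _.
by rewrite -mulr_suml -natr_sum /cmeas -sum1_count [in RHS]big_mkcond.
Qed.

Lemma V_root_block_const {i : 'I_K} {x y : R} :
  x \in X -> y \in X -> x \in I i -> y \in I i -> f y = f x.
Proof.
move=> xX yX xi yi; have [a [fa _]] := fV.
by rewrite (fa i x xX xi) (fa i y yX yi).
Qed.

Lemma hierarchical_laplacian_term {W : R -> R -> R} {p x y : R} :
  one_level_hierarchical_graphon I W p -> x \in X -> y \in X ->
  W x y * (f y - f x) = p * (f y - f x).
Proof.
move=> [_ [_ Wp]] xX yX.
have [i xi] := partition_block_exists (X01 _ xX).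
have [j yj] := partition_block_exists (X01 _ yX).
have [eij|ij] := eqVneq i j; last by rewrite (Wp i j x y ij xi yj).
rewrite -eij in yj.
by rewrite (V_root_block_const xX yX xi yj) subrr !mulr0.
Qed.

End SampledFunction.
End IntervalPartition.

Lemma graph_laplacian_const_weight {R : realType} {W : R -> R -> R} {X : seq R}
    {f : R -> R} {x p : R} :
  (forall y, y \in X -> W x y * (f y - f x) = p * (f y - f x)) ->
  graph_laplacian W X f x = p * (\sum_(y <- X) f y - (size X)%:R * f x).
Proof.
move=> Wxp; rewrite /graph_laplacian (eq_big_seq _ Wxp) -mulr_sumr.
by rewrite big_split /= sumrN big_const_seq count_predT iter_addr_0 mulr_natl.
Qed.

Theorem proposition7p2 (R : realType) (K : nat) (I : 'I_K -> interval R)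
  (q : 'I_K -> rat) (k : nat) (X : seq R) (W : R -> R -> R) (p : R) :
  is_interval_partition I ->
  (forall i : 'I_K, 0 < q i) ->
  (forall i : 'I_K, lebesgue_measure ([set` I i] : set R) = (ratr (q i) : R)%:E) ->
  (1 <= k)%N ->
  let N := (\big[lcmn/1%N]_(i < K) `|denq (q i)|%N)%N in
  let Nk := (k * N)%N in
  (2 <= Nk)%N ->
  uniq X -> size X = Nk ->
  (forall x : R, x \in X -> 0 <= x <= 1) ->
  (forall i : 'I_K, (cmeas X (I i))%:R = (Nk%:R * ratr (q i) : R)) ->
  one_level_hierarchical_graphon I W p ->
  forall f : R -> R, V_root I X f ->
  forall x : R, x \in X ->
    graph_laplacian W X f x = - p * (size X)%:R * f x.
Proof.
move=> partI _ _ _ N Nk _ _ _ X01 _ hW f fV x xX.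
have Wxp := hierarchical_laplacian_term partI X01 fV hW xX.
rewrite (graph_laplacian_const_weight Wxp) (V_root_sum_eq0 partI X01 fV) add0r.
by rewrite mulrN !mulNr mulrA.
Qed.
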